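(* Let $m,k\in\mathbb{N}$, let $\alpha,\beta,\mu\in\mathbb{C}$ with $\alpha,1+\alpha+\beta+k\notin\mathbb{Z}_0^-$, $\Re(\beta)>0$ and $\Re(\mu)>0$. Then \[ \int_0^\infty t^{\beta-1}e^{-\mu t}\,{}_2F_2\left[\begin{array}{r} -m,\ \alpha;\\ -m-k,\ 1+\alpha+\beta+k;\end{array}\mu t\right]_m dt=\frac{\Gamma(\beta)}{\mu^{\beta}}\frac{\left(1+\alpha+k\right)_m\left(1+\beta+k\right)_m}{\left(1+k\right)_m\left(1+\alpha+\beta+k\right)_m}. \]
   Context: $\mathbb{N}=\{1,2,3,\dots\}$, $\mathbb{Z}_0^-=\{0,-1,-2,\dots\}$. For $a\in\mathbb{C}$ and $n\in\mathbb{N}_0$, $(a)_0=1$ and $(a)_n=a(a+1)\cdots(a+n-1)$. For $N\in\mathbb{N}_0$, the truncated series is ${}_2F_2\left[\begin{array}{r} a_1,a_2;\\ b_1,b_2;\end{array}z\right]_N=\sum_{n=0}^{N}\frac{(a_1)_n(a_2)_n}{(b_1)_n(b_2)_n}\frac{z^n}{n!}$ (first $N+1$ terms). The left side is the Mellin transform $\int_0^\infty t^{s-1}f(t)\,dt$ at $s=\beta$; $\mu^{\beta}$ denotes the principal power. *)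

From Stdlib Require Import Reals Factorial.
From Coquelicot Require Import Coquelicot.
Open Scope R_scope.

Definition Cexp (z : C) : C :=
  (exp (Re z) * cos (Im z), exp (Re z) * sin (Im z)).

(* principal argument, in (-PI, PI] *)
Definition Carg (z : C) : R :=
  let x := Re z in let y := Im z in
  match Rlt_dec 0 x with
  | left _ => atan (y / x)
  | right _ =>
    match Rlt_dec x 0 with
    | left _ => match Rle_dec 0 y with
                | left _ => atan (y / x) + PI
                | right _ => atan (y / x) - PI end
    | right _ => match Rlt_dec 0 y with
                 | left _ => PI / 2
                 | right _ => match Rlt_dec y 0 with
                              | left _ => - (PI / 2)
                              | right _ => 0 end end
    end
  end.

Definition Clog (z : C) : C := (ln (Cmod z), Carg z).

Definition Cpowc (z w : C) : C := Cexp (w * Clog z)%C.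

Fixpoint poch (a : C) (n : nat) : C :=
  match n with
  | O => 1%C
  | S n' => (poch a n' * (a + RtoC (INR n')))%C
  end.

(* truncated 2F2 series: first N+1 terms *)
Definition F22_trunc (a1 a2 b1 b2 z : C) (N : nat) : C :=
  sum_n (fun n => (poch a1 n * poch a2 n / (poch b1 n * poch b2 n)
                   * (z ^ n) / RtoC (INR (Factorial.fact n)))%C) N.

Definition CGamma (s : C) : C :=
  RInt_gen (V := C_R_CompleteNormedModule)
    (fun t => (Cpowc (RtoC t) (s - 1) * RtoC (exp (- t)))%C)
    (at_right 0) (Rbar_locally p_infty).

Definition in_Z0minus (z : C) : Prop := exists n : nat, z = RtoC (- INR n).

From Stdlib Require Import Reals Lra Lia FunctionalExtensionality.
From Coquelicot Require Import Coquelicot.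
Open Scope R_scope.

(* The truncated series is a polynomial in [t], so it can be integrated term by term.
   For [Re s > 0] and [Re nu > 0] one has [int_0^oo t^(s-1) e^(-nu t) dt = Gamma(s) nu^(-s)],
   and integration by parts gives [(s)_n] for the shift [s -> s + n]; hence the powers of
   [mu] cancel and the integral is [Gamma(beta) mu^(-beta)] times the terminating balanced
   series [3F2(-m, alpha, beta; -m-k, 1+alpha+beta+k; 1)], which the Pfaff-Saalschuetz
   theorem sums to the stated ratio of Pochhammer symbols.
   The scaling law in [nu] is obtained by moving [nu] along the segment from [1] to [mu]:
   differentiating under the integral sign and integrating by parts shows that the integral
   times [exp (s log nu)] has zero derivative. *)

(* [ring] and [field] only recognise equations stated at type [C] itself, not at one of
   Coquelicot's structures on it. *)
Ltac C_eq := match goal with |- ?a = ?b => change (@eq C a b) end.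

Ltac neq0_by_Re := let E := fresh in intro E; apply (f_equal Re) in E; unfold Re in E; simpl in E.

Lemma RtoC_neq0 (x : R) : x <> 0 -> RtoC x <> RtoC 0.
Proof. intros H E. apply RtoC_inj in E. auto. Qed.

Lemma Cexp_add (a b : C) : Cexp (a + b)%C = (Cexp a * Cexp b)%C.
Proof.
  destruct a as [x1 y1], b as [x2 y2]; unfold Cexp; simpl.
  rewrite exp_plus, cos_plus, sin_plus.
  apply injective_projections; simpl; ring.
Qed.

Lemma Cmod_Cexp (z : C) : Cmod (Cexp z) = exp (Re z).
Proof.
  destruct z as [x y]; unfold Cexp, Cmod; simpl.
  pose proof (sin2_cos2 y) as H. unfold Rsqr in H.
  match goal with |- sqrt ?a = _ => replace a with (exp x * exp x) by nra end.
  apply sqrt_square. left; apply exp_pos.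
Qed.

Lemma Cexp_neq0 (z : C) : Cexp z <> RtoC 0.
Proof.
  intro H. pose proof (exp_pos (Re z)).
  rewrite <- Cmod_Cexp, H, Cmod_0 in H0. lra.
Qed.

Lemma Cexp_RtoC (x : R) : Cexp (RtoC x) = RtoC (exp x).
Proof.
  unfold Cexp; simpl. rewrite cos_0, sin_0.
  apply injective_projections; simpl; ring.
Qed.

Lemma Cexp_0 : Cexp (RtoC 0) = RtoC 1.
Proof. rewrite Cexp_RtoC, exp_0. reflexivity. Qed.

Lemma Clog_Re_pos (z : C) : 0 < Re z -> Clog z = (ln (Cmod z), atan (Im z / Re z)).
Proof. intros H. unfold Clog, Carg. destruct (Rlt_dec 0 (Re z)); [reflexivity | lra]. Qed.

Lemma Cpowc_RtoC_pos (t : R) (w : C) : 0 < t ->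
  Cpowc (RtoC t) w = Cexp (w * RtoC (ln t))%C.
Proof.
  intros Ht. unfold Cpowc. rewrite Clog_Re_pos by (simpl; lra).
  simpl. unfold Rdiv. rewrite Rmult_0_l, atan_0, Cmod_R, Rabs_pos_eq by lra.
  reflexivity.
Qed.

Lemma Cmod_Cpowc_RtoC (t : R) (w : C) : 0 < t -> Cmod (Cpowc (RtoC t) w) = Rpower t (Re w).
Proof.
  intros Ht. rewrite Cpowc_RtoC_pos, Cmod_Cexp by auto.
  unfold Rpower. f_equal. destruct w; simpl. ring.
Qed.

Lemma Cpowc_RtoC_add_nat (t : R) (w : C) (n : nat) : 0 < t ->
  Cpowc (RtoC t) (w + RtoC (INR n))%C = (Cpowc (RtoC t) w * RtoC (t ^ n))%C.
Proof.
  intros Ht. rewrite !Cpowc_RtoC_pos by auto.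
  replace ((w + RtoC (INR n)) * RtoC (ln t))%C with (w * RtoC (ln t) + RtoC (INR n * ln t))%C
    by (rewrite RtoC_mult; ring).
  rewrite Cexp_add, Cexp_RtoC, <- ln_pow, exp_ln by (try apply pow_lt; auto).
  reflexivity.
Qed.

Lemma Cpowc_RtoC_add1 (t : R) (w : C) : 0 < t ->
  Cpowc (RtoC t) (w + 1)%C = (Cpowc (RtoC t) w * RtoC t)%C.
Proof.
  intros Ht. pose proof (Cpowc_RtoC_add_nat t w 1 Ht) as H.
  rewrite pow_1 in H. exact H.
Qed.

(** * Calculus of complex-valued functions of a real variable *)

Lemma norm_C (z : C) : @norm R_AbsRing C_R_NormedModule z = Cmod z.
Proof.
  destruct z as [x y]. unfold norm; simpl. unfold prod_norm, Cmod; simpl.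
  unfold norm; simpl. unfold abs; simpl.
  f_equal. rewrite !Rmult_1_r, <- !Rabs_mult, !Rabs_right; try ring;
  apply Rle_ge, Rle_0_sqr.
Qed.

Lemma minus_C (a b : C) : minus (G := C_R_NormedModule) a b = (a - b)%C.
Proof. reflexivity. Qed.

Lemma scal_C (k : R) (a : C) : scal (V := C_R_NormedModule) k a = (RtoC k * a)%C.
Proof.
  destruct a as [a1 a2]. change (((k * a1)%R, (k * a2)%R) = (RtoC k * (a1, a2))%C).
  apply injective_projections; simpl; ring.
Qed.

Lemma Cmod_ball (x y : C) (eps : R) :
  Cmod (y - x) < eps -> ball (M := C_R_NormedModule) x eps y.
Proof. intros H. apply (norm_compat1 (V := C_R_NormedModule)). rewrite minus_C, norm_C. exact H. Qed.

Section CDerivatives.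

Notation is_derive_C := (is_derive (K := R_AbsRing) (V := C_R_NormedModule)).

Lemma is_derive_eq {V : NormedModule R_AbsRing} (f : R -> V) x l l' :
  is_derive f x l -> l = l' -> is_derive f x l'.
Proof. intros H ->; exact H. Qed.

Lemma is_derive_C_pair (f : R -> C) (x a b : R) :
  is_derive (fun t => fst (f t)) x a -> is_derive (fun t => snd (f t)) x b ->
  is_derive_C f x ((a, b) : C).
Proof.
  intros Ha Hb. unfold is_derive in *.
  assert (H := filterdiff_comp'_2 (K := R_AbsRing) (W := C_R_NormedModule)
            (fun t => fst (f t)) (fun t => snd (f t))
            (fun u v => (u, v) : C) x _ _ (fun u v => (u, v) : C) Ha Hb).
  apply (filterdiff_ext_lin (F := locally x) f (fun y : R => ((scal y a, scal y b) : C))).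
  - eapply (filterdiff_ext_locally (fun y => (fst (f y), snd (f y)) : C)); [| apply H].
    + apply filter_forall. intros y. destruct (f y); reflexivity.
    + apply filterdiff_linear. split.
      * intros [a1 b1] [a2 b2]. reflexivity.
      * intros k [a1 b1]. reflexivity.
      * exists 1. split; [lra|]. intros [a1 b1]. rewrite Rmult_1_l. apply Rle_refl.
  - reflexivity.
Qed.

Lemma is_derive_C_fst (f : R -> C) (x : R) (l : C) :
  is_derive_C f x l -> is_derive (fun t => fst (f t)) x (fst l).
Proof.
  intros H. apply (filterdiff_comp' (K := R_AbsRing) (V := C_R_NormedModule) f
     (fun t : C => fst t) x _ (fun t : C => fst t) H).
  apply filterdiff_linear, (is_linear_fst (U := R_NormedModule) (V := R_NormedModule)).
Qed.

Lemma is_derive_C_snd (f : R -> C) (x : R) (l : C) :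
  is_derive_C f x l -> is_derive (fun t => snd (f t)) x (snd l).
Proof.
  intros H. apply (filterdiff_comp' (K := R_AbsRing) (V := C_R_NormedModule) f
     (fun t : C => snd t) x _ (fun t : C => snd t) H).
  apply filterdiff_linear, (is_linear_snd (U := R_NormedModule) (V := R_NormedModule)).
Qed.

Lemma is_derive_Rmult (f g : R -> R) x df dg :
  is_derive f x df -> is_derive g x dg ->
  is_derive (fun t => f t * g t) x (df * g x + f x * dg).
Proof. intros Hf Hg. apply (is_derive_mult f g x df dg Hf Hg). intros; apply Rmult_comm. Qed.

Lemma is_derive_Cmult (f g : R -> C) x df dg :
  is_derive_C f x df -> is_derive_C g x dg ->
  is_derive_C (fun t => (f t * g t)%C) x (df * g x + f x * dg)%C.
Proof.
  intros Hf Hg.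
  pose proof (is_derive_C_fst _ _ _ Hf). pose proof (is_derive_C_snd _ _ _ Hf).
  pose proof (is_derive_C_fst _ _ _ Hg). pose proof (is_derive_C_snd _ _ _ Hg).
  eapply is_derive_eq; [apply is_derive_C_pair|].
  - eapply is_derive_ext; [|apply (is_derive_minus (K := R_AbsRing) (V := R_NormedModule));
      [apply (is_derive_Rmult (fun t => fst (f t)) (fun t => fst (g t)))
      |apply (is_derive_Rmult (fun t => snd (f t)) (fun t => snd (g t)))]; eassumption].
    intros t. simpl. unfold minus, plus, opp; simpl. ring.
  - eapply is_derive_ext; [|apply (is_derive_plus (K := R_AbsRing) (V := R_NormedModule));
      [apply (is_derive_Rmult (fun t => fst (f t)) (fun t => snd (g t)))
      |apply (is_derive_Rmult (fun t => snd (f t)) (fun t => fst (g t)))]; eassumption].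
    intros t. simpl. unfold plus; simpl. ring.
  - destruct df, dg, (f x), (g x); apply injective_projections; simpl;
      unfold minus, plus, opp; simpl; ring.
Qed.

Lemma is_derive_Cexp (f : R -> C) x df :
  is_derive_C f x df -> is_derive_C (fun t => Cexp (f t)) x (df * Cexp (f x))%C.
Proof.
  intros Hf.
  pose proof (is_derive_C_fst _ _ _ Hf) as Hf1.
  pose proof (is_derive_C_snd _ _ _ Hf) as Hf2.
  unfold Cexp, Re, Im.
  eapply is_derive_eq; [apply is_derive_C_pair; simpl; apply is_derive_Rmult|].
  - apply (is_derive_comp exp (fun t => fst (f t))); [apply is_derive_exp | exact Hf1].
  - apply (is_derive_comp cos (fun t => snd (f t))); [apply is_derive_cos | exact Hf2].
  - apply (is_derive_comp exp (fun t => fst (f t))); [apply is_derive_exp | exact Hf1].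
  - apply (is_derive_comp sin (fun t => snd (f t))); [apply is_derive_sin | exact Hf2].
  - destruct df, (f x); apply injective_projections; simpl;
      unfold scal; simpl; unfold mult; simpl; ring.
Qed.

Lemma is_derive_Cconst (a : C) x : is_derive_C (fun _ => a) x (RtoC 0).
Proof. apply (is_derive_const (K := R_AbsRing) (V := C_R_NormedModule)). Qed.

Lemma is_derive_Cplus (f g : R -> C) x df dg :
  is_derive_C f x df -> is_derive_C g x dg ->
  is_derive_C (fun t => (f t + g t)%C) x (df + dg)%C.
Proof. apply (is_derive_plus (K := R_AbsRing) (V := C_R_NormedModule)). Qed.

Lemma is_derive_Cmult_l (a : C) (f : R -> C) x df :
  is_derive_C f x df -> is_derive_C (fun t => (a * f t)%C) x (a * df)%C.
Proof.
  intros Hf. eapply is_derive_eq; [apply (is_derive_Cmult (fun _ => a) f);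
    [apply is_derive_Cconst | exact Hf]|].
  simpl. ring.
Qed.

Lemma is_derive_C_affine (a b : C) x : is_derive_C (fun t => (RtoC t * a + b)%C) x a.
Proof.
  destruct a as [a1 a2], b as [b1 b2].
  eapply is_derive_eq; [apply is_derive_C_pair|].
  - apply is_derive_ext with (f := fun t => t * a1 + b1); [intros t; simpl; ring|].
    auto_derive; auto.
  - apply is_derive_ext with (f := fun t => t * a2 + b2); [intros t; simpl; ring|].
    auto_derive; auto.
  - apply injective_projections; simpl; ring.
Qed.

Lemma continuous_C_of_is_derive (f df : R -> C) x :
  (forall t, is_derive_C f t (df t)) -> continuous (U := C_R_NormedModule) f x.
Proof.
  intros H. apply (ex_derive_continuous (K := R_AbsRing) (V := C_R_NormedModule)).
  eexists. apply H.
Qed.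

Lemma Cmod_sub_le_of_derive (f df : R -> C) (a b M : R) : a <= b ->
  (forall x, a <= x <= b -> is_derive_C f x (df x)) ->
  (forall x, a <= x <= b -> continuous (U := C_R_NormedModule) df x) ->
  (forall x, a <= x <= b -> Cmod (df x) <= M) ->
  Cmod (f b - f a)%C <= (b - a) * M.
Proof.
  intros Hab Hd Hc HM.
  assert (H := is_RInt_derive (V := C_R_CompleteNormedModule) f df a b).
  rewrite Rmin_left, Rmax_right in H by lra.
  rewrite <- norm_C, <- minus_C.
  apply (norm_RInt_le (V := C_R_NormedModule) df (fun _ => M) a b _ (scal (b - a) M) Hab).
  - intros x Hx. rewrite norm_C. auto.
  - exact (H Hd Hc).
  - apply (is_RInt_const (V := R_NormedModule)).
Qed.

End CDerivatives.

Lemma exp_le_mono (x y : R) : x <= y -> exp x <= exp y.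
Proof.
  intros H. destruct (Rle_lt_or_eq_dec x y H) as [H1 | ->].
  - left. apply exp_increasing; auto.
  - apply Rle_refl.
Qed.

(* Twice the mean value inequality along [s |-> exp (- s z)], 0 <= s <= 1. *)
Lemma Cmod_Cexp_opp_taylor (z : C) :
  Cmod (Cexp (- z)%C - 1 + z)%C <= Cmod z ^ 2 * exp (Cmod z).
Proof.
  set (psi := fun s : R => Cexp (RtoC s * (- z) + 0)%C).
  set (dpsi := fun s : R => ((- z) * psi s)%C).
  assert (Dpsi : forall s, is_derive (V := C_R_NormedModule) psi s (dpsi s)).
  { intros s. apply is_derive_Cexp, is_derive_C_affine. }
  assert (Dphi : forall s, is_derive (V := C_R_NormedModule)
                   (fun u => psi u + (RtoC u * z + (- 1)))%C s (dpsi s + z)%C).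
  { intros s. apply is_derive_Cplus; [apply Dpsi | apply is_derive_C_affine]. }
  assert (Hpsi0 : psi 0 = RtoC 1).
  { unfold psi. replace (RtoC 0 * - z + 0)%C with (RtoC 0) by ring. apply Cexp_0. }
  assert (Hpsi1 : psi 1 = Cexp (- z)%C) by (unfold psi; f_equal; ring).
  assert (Bpsi : forall s, 0 <= s <= 1 -> Cmod (psi s) <= exp (Cmod z)).
  { intros s Hs. unfold psi. rewrite Cmod_Cexp. apply exp_le_mono.
    pose proof (re_le_Cmod z). pose proof (Cmod_ge_0 z). destruct z as [z1 z2].
    pose proof (Rle_abs (- z1)). rewrite Rabs_Ropp in *. simpl in *. nra. }
  assert (Bpsi1 : forall s, 0 <= s <= 1 -> Cmod (psi s - 1)%C <= s * (Cmod z * exp (Cmod z))).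
  { intros s Hs. rewrite <- Hpsi0. replace s with (s - 0) at 2 by ring.
    apply (Cmod_sub_le_of_derive psi dpsi); [lra | auto | |].
    - intros; apply (continuous_C_of_is_derive _ (fun u => (- z * dpsi u)%C)).
      intros u. apply is_derive_Cmult_l, Dpsi.
    - intros x Hx. unfold dpsi. rewrite Cmod_mult, Cmod_opp.
      apply Rmult_le_compat_l; [apply Cmod_ge_0 | apply Bpsi; lra]. }
  replace (Cexp (- z)%C - 1 + z)%C with
    ((psi 1 + (RtoC 1 * z + (- 1))) - (psi 0 + (RtoC 0 * z + (- 1))))%C
    by (rewrite Hpsi0, Hpsi1; ring).
  replace (Cmod z ^ 2 * exp (Cmod z)) with ((1 - 0) * (Cmod z ^ 2 * exp (Cmod z))) by ring.
  apply (Cmod_sub_le_of_derive (fun s => psi s + (RtoC s * z + (- 1)))%C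
           (fun s => dpsi s + z)%C); [lra | auto | |].
  - intros; apply (continuous_C_of_is_derive _ (fun u => (- z * dpsi u + 0)%C)).
    intros u. apply is_derive_Cplus; [apply is_derive_Cmult_l, Dpsi | apply is_derive_Cconst].
  - intros s Hs. unfold dpsi.
    replace ((- z) * psi s + z)%C with ((- z) * (psi s - 1))%C by ring.
    rewrite Cmod_mult, Cmod_opp.
    pose proof (Cmod_ge_0 z). pose proof (exp_pos (Cmod z)).
    apply Rle_trans with (Cmod z * (s * (Cmod z * exp (Cmod z))));
      [apply Rmult_le_compat_l; auto|].
    assert (0 <= Cmod z * (Cmod z * exp (Cmod z))) by (apply Rmult_le_pos; nra).
    simpl. nra.
Qed.

Lemma exp_pow (x : R) (n : nat) : exp x ^ n = exp (INR n * x).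
Proof.
  induction n as [|n IH]; [simpl; rewrite Rmult_0_l, exp_0; reflexivity|].
  rewrite S_INR, <- tech_pow_Rmult, IH, <- exp_plus. f_equal. ring.
Qed.

Lemma Rpower_le_exp (p b : R) : 0 < b ->
  exists K, 0 < K /\ forall t, 1 <= t -> Rpower t p <= K * exp (b * t).
Proof.
  intros Hb.
  destruct (INR_unbounded p) as [n Hn].
  set (N := INR (S n)).
  assert (HN : 0 < N) by (unfold N; rewrite S_INR; pose proof (pos_INR n); lra).
  exists ((N / b) ^ S n). split; [apply pow_lt, Rdiv_lt_0_compat; auto|].
  intros t Ht.
  apply Rle_trans with (Rpower t N); [apply Rle_Rpower; [lra | unfold N; rewrite S_INR; lra]|].
  unfold N at 1. rewrite Rpower_pow by lra.
  assert (Hlin : t <= N / b * exp (b * t / N)).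
  { pose proof (exp_ineq1_le (b * t / N)).
    replace t with (N / b * (b * t / N)) at 1 by (field; lra).
    apply Rmult_le_compat_l; [left; apply Rdiv_lt_0_compat|]; lra. }
  apply Rle_trans with ((N / b * exp (b * t / N)) ^ S n); [apply pow_incr; lra|].
  rewrite Rpow_mult_distr. apply Rmult_le_compat_l; [left; apply pow_lt, Rdiv_lt_0_compat; auto|].
  right. rewrite exp_pow. f_equal. fold N. field. lra.
Qed.

Lemma Rpower_exp_small_near_0 (sg a : R) : 0 < sg -> 0 <= a -> forall eps, 0 < eps ->
  exists eta, 0 < eta /\ forall x, 0 < x < eta -> Rpower x sg * exp (- a * x) < eps.
Proof.
  intros Hs Ha eps He.
  exists (Rpower eps (1 / sg)). split; [apply exp_pos|].
  intros x [Hx Hxe].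
  apply Rle_lt_trans with (Rpower x sg).
  - rewrite <- (Rmult_1_r (Rpower x sg)) at 2. apply Rmult_le_compat_l; [left; apply exp_pos|].
    rewrite <- exp_0. apply exp_le_mono. nra.
  - replace eps with (Rpower (Rpower eps (1 / sg)) sg).
    + apply exp_increasing, Rmult_lt_compat_l, ln_increasing; auto.
    + rewrite Rpower_mult. replace (1 / sg * sg) with 1 by (field; lra). apply Rpower_1; auto.
Qed.

Lemma Rpower_exp_small_near_infty (sg a : R) : 0 < a -> forall eps, 0 < eps ->
  exists M, forall y, M < y -> Rpower y sg * exp (- a * y) < eps.
Proof.
  intros Ha eps He.
  destruct (Rpower_le_exp sg (a / 2)) as [K [HK HKb]]; [lra|].
  exists (Rmax 1 ((2 / a) * ln (K / eps))).
  intros y Hy.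
  assert (Hy1 : 1 < y) by (eapply Rle_lt_trans; [apply Rmax_l | exact Hy]).
  assert (Hy2 : (2 / a) * ln (K / eps) < y) by (eapply Rle_lt_trans; [apply Rmax_r | exact Hy]).
  apply Rle_lt_trans with (K * exp (a / 2 * y) * exp (- a * y)).
  { apply Rmult_le_compat_r; [left; apply exp_pos | apply HKb; lra]. }
  rewrite Rmult_assoc, <- exp_plus.
  replace (a / 2 * y + - a * y) with (- (a / 2) * y) by field.
  assert (exp (- (a / 2) * y) < eps / K).
  { rewrite <- (exp_ln (eps / K)) by (apply Rdiv_lt_0_compat; auto).
    apply exp_increasing.
    rewrite ln_div in * by auto.
    assert (- (a / 2) * (2 / a * (ln K - ln eps)) = ln eps - ln K) by (field; lra).
    nra. }
  apply Rlt_le_trans with (K * (eps / K)); [apply Rmult_lt_compat_l; auto|].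
  right. field. lra.
Qed.

Lemma Rmult_frac_lt (e X : R) : 0 <= X -> 0 < e -> e * (X / (X + 1)) < e.
Proof.
  intros HX He.
  assert (X / (X + 1) < 1).
  { apply (Rmult_lt_reg_r (X + 1)); [lra|].
    replace (X / (X + 1) * (X + 1)) with X by (field; lra). lra. }
  assert (0 <= X / (X + 1)) by (apply Rdiv_le_0_compat; lra).
  nra.
Qed.

(** * Improper integrals on (0, +oo) *)

Section ImproperIntegrals.

Notation is_RInt_C := (is_RInt (V := C_R_NormedModule)).
Notation ex_RInt_C := (ex_RInt (V := C_R_CompleteNormedModule)).

Definition RInt_C (f : R -> C) (a b : R) : C := RInt (V := C_R_CompleteNormedModule) f a b.

Definition is_RInt_0_infty (f : R -> C) (I : C) : Prop :=
  is_RInt_gen (V := C_R_NormedModule) f (at_right 0) (Rbar_locally p_infty) I.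

Definition filter_prod_proper_0_infty :=
  @filter_prod_proper _ _ (at_right 0) (Rbar_locally p_infty)
    (at_right_proper_filter 0) (Rbar_locally_filter p_infty).

Lemma at_right_0_pos : at_right 0 (fun x => 0 < x).
Proof. unfold at_right, within. apply filter_forall. auto. Qed.

Lemma filter_prod_0_infty (Q R : R -> Prop) :
  at_right 0 Q -> Rbar_locally p_infty R ->
  filter_prod (at_right 0) (Rbar_locally p_infty) (fun ab => Q (fst ab) /\ R (snd ab)).
Proof. intros HQ HR. apply (Filter_prod _ _ _ Q R HQ HR). auto. Qed.

Lemma at_right_0_lt (eta : R) : 0 < eta -> at_right 0 (fun x => 0 < x < eta).
Proof.
  intros Heta. exists (mkposreal eta Heta). intros y Hy Hy0. split; [exact Hy0|].
  change (Rabs (y - 0) < eta) in Hy. rewrite Rminus_0_r, Rabs_pos_eq in Hy; lra.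
Qed.

Lemma ex_RInt_C_pos (f : R -> C) x y : 0 < x -> 0 < y ->
  (forall t, 0 < t -> continuous (U := C_R_NormedModule) f t) -> ex_RInt_C f x y.
Proof.
  intros Hx Hy Hc. apply ex_RInt_continuous. intros z [Hz _]. apply Hc.
  eapply Rlt_le_trans; [|exact Hz]. apply Rmin_glb_lt; auto.
Qed.

Lemma RInt_C_Chasles (f : R -> C) a b c : ex_RInt_C f a b -> ex_RInt_C f b c ->
  (RInt_C f a b + RInt_C f b c)%C = RInt_C f a c.
Proof. apply (RInt_Chasles (V := C_R_CompleteNormedModule)). Qed.

Lemma Cmod_RInt_C_swap (f : R -> C) x y : ex_RInt_C f x y -> Cmod (RInt_C f y x) = Cmod (RInt_C f x y).
Proof.
  intros H. unfold RInt_C. rewrite <- (opp_RInt_swap (V := C_R_CompleteNormedModule)) by auto.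
  rewrite <- !norm_C. apply (norm_opp (V := C_R_NormedModule)).
Qed.

Lemma Cmod_RInt_C_le_antiderivative (f : R -> C) (G g : R -> R) x y : x <= y ->
  (forall t, x <= t <= y -> is_derive G t (g t)) ->
  (forall t, x <= t <= y -> continuous g t) ->
  (forall t, x <= t <= y -> Cmod (f t) <= g t) ->
  ex_RInt_C f x y -> Cmod (RInt_C f x y) <= G y - G x.
Proof.
  intros Hxy HG Hg Hf Hex. rewrite <- norm_C.
  apply (norm_RInt_le (V := C_R_NormedModule) f g x y _ _ Hxy).
  - intros t Ht. rewrite norm_C. auto.
  - apply (RInt_correct (V := C_R_CompleteNormedModule)), Hex.
  - apply (is_RInt_derive (V := R_CompleteNormedModule)); rewrite Rmin_left, Rmax_right; auto.
Qed.

Lemma is_RInt_0_infty_RInt_gen (f : R -> C) I : is_RInt_0_infty f I ->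
  RInt_gen (V := C_R_CompleteNormedModule) f (at_right 0) (Rbar_locally p_infty) = I.
Proof. intros H. apply is_RInt_gen_unique. exact H. Qed.

Lemma is_RInt_0_infty_unique (f : R -> C) I1 I2 :
  is_RInt_0_infty f I1 -> is_RInt_0_infty f I2 -> I1 = I2.
Proof.
  intros H1 H2. rewrite <- (is_RInt_0_infty_RInt_gen f I1), <- (is_RInt_0_infty_RInt_gen f I2); auto.
Qed.

Lemma is_RInt_0_infty_plus (f g : R -> C) If Ig :
  is_RInt_0_infty f If -> is_RInt_0_infty g Ig -> is_RInt_0_infty (fun t => (f t + g t)%C) (If + Ig)%C.
Proof. intros Hf Hg. exact (is_RInt_gen_plus (V := C_R_NormedModule) f g If Ig Hf Hg). Qed.

Lemma is_RInt_0_infty_ext (f g : R -> C) I :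
  (forall t, 0 < t -> f t = g t) -> is_RInt_0_infty f I -> is_RInt_0_infty g I.
Proof.
  intros Hfg Hf. apply (is_RInt_gen_ext (V := C_R_NormedModule) f g I); [|exact Hf].
  eapply filter_imp; [|apply (filter_prod_0_infty (fun x => 0 < x) (fun y => 0 < y))];
    [|apply at_right_0_pos | exists 0; auto].
  intros [x y] [Hx Hy] z [Hz _]. apply Hfg. simpl in *.
  eapply Rle_lt_trans; [|exact Hz]. apply Rmin_glb; lra.
Qed.

Lemma is_RInt_0_infty_sum (f : nat -> R -> C) (I : nat -> C) N :
  (forall n, (n <= N)%nat -> is_RInt_0_infty (f n) (I n)) ->
  is_RInt_0_infty (fun t => sum_n (fun n => f n t) N) (sum_n I N).
Proof.
  induction N as [|N IH]; intros H.
  - rewrite sum_O. eapply is_RInt_0_infty_ext; [|apply H; lia].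
    intros t _. rewrite sum_O. reflexivity.
  - rewrite sum_Sn. eapply is_RInt_0_infty_ext; [|apply is_RInt_0_infty_plus; [apply IH | apply H]].
    + intros t _. rewrite sum_Sn. reflexivity.
    + intros n Hn. apply H. lia.
    + lia.
Qed.

Lemma is_RInt_C_mult_l (f : R -> C) a b l (k : C) :
  is_RInt_C f a b l -> is_RInt_C (fun t => (k * f t)%C) a b (k * l)%C.
Proof.
  intros H.
  pose proof (is_RInt_fct_extend_fst (U := R_NormedModule) (V := R_NormedModule) f a b l H) as H1.
  pose proof (is_RInt_fct_extend_snd (U := R_NormedModule) (V := R_NormedModule) f a b l H) as H2.
  destruct k as [k1 k2].
  replace ((k1, k2) * l)%C with ((k1 * fst l - k2 * snd l, k1 * snd l + k2 * fst l) : C)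
    by (destruct l; apply injective_projections; simpl; ring).
  apply (is_RInt_fct_extend_pair (U := R_NormedModule) (V := R_NormedModule)).
  - eapply is_RInt_ext; [|apply (is_RInt_minus (V := R_NormedModule));
      apply (is_RInt_scal (V := R_NormedModule)); [exact H1 | exact H2]].
    intros x _. simpl. unfold minus, plus, opp, scal; simpl. unfold mult; simpl. ring.
  - eapply is_RInt_ext; [|apply (is_RInt_plus (V := R_NormedModule));
      apply (is_RInt_scal (V := R_NormedModule)); [exact H2 | exact H1]].
    intros x _. simpl. unfold plus, scal; simpl. unfold mult; simpl. ring.
Qed.

Lemma locally_C_mult_l (k l : C) (P : C -> Prop) :
  locally (T := C_R_NormedModule) (k * l)%C P ->
  locally (T := C_R_NormedModule) l (fun z => P (k * z)%C).
Proof.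
  intros HP.
  destruct (locally_norm_le_locally (K := R_AbsRing) (V := C_R_NormedModule) _ P HP) as [eps Heps].
  assert (Hk : 0 < Cmod k + 1) by (pose proof (Cmod_ge_0 k); lra).
  apply (locally_le_locally_norm (K := R_AbsRing) (V := C_R_NormedModule) l).
  exists (mkposreal (eps / (Cmod k + 1)) (Rdiv_lt_0_compat _ _ (cond_pos eps) Hk)).
  intros z Hz. apply Heps. unfold ball_norm in *. simpl in Hz. rewrite minus_C, norm_C in *.
  replace (k * z - k * l)%C with (k * (z - l))%C by ring.
  rewrite Cmod_mult. pose proof (Cmod_ge_0 k). pose proof (Cmod_ge_0 (z - l)%C).
  apply Rle_lt_trans with ((Cmod k + 1) * Cmod (z - l)%C); [nra|].
  replace (pos eps) with ((Cmod k + 1) * (eps / (Cmod k + 1))) by (field; lra).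
  apply Rmult_lt_compat_l; auto.
Qed.

Lemma is_RInt_0_infty_mult_l (f : R -> C) I (k : C) :
  is_RInt_0_infty f I -> is_RInt_0_infty (fun t => (k * f t)%C) (k * I)%C.
Proof.
  intros H P HP. specialize (H _ (locally_C_mult_l k I P HP)).
  unfold filtermapi in *. eapply filter_imp; [|exact H]. intros ab [y [Hy HPy]].
  exists (k * y)%C. split; [apply is_RInt_C_mult_l|]; assumption.
Qed.

Lemma is_RInt_0_infty_derive_vanishing (F f : R -> C) :
  (forall x y, 0 < x -> 0 < y -> is_RInt_C f x y (F y - F x)%C) ->
  (forall eps, 0 < eps -> exists eta, 0 < eta /\ forall x, 0 < x < eta -> Cmod (F x) < eps) ->
  (forall eps, 0 < eps -> exists M, forall y, M < y -> Cmod (F y) < eps) ->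
  is_RInt_0_infty f (RtoC 0).
Proof.
  intros HF H0 Hinf P [eps HP].
  assert (He : 0 < eps / 2) by (destruct eps; simpl; lra).
  destruct (H0 _ He) as [eta [Heta Heta']], (Hinf _ He) as [M HM].
  unfold filtermapi. eapply filter_imp;
    [|apply (filter_prod_0_infty (fun x => 0 < x < eta) (fun y => Rmax M 0 < y))];
    [|apply at_right_0_lt; auto | exists (Rmax M 0); auto].
  intros [x y] [Hx Hy]. simpl in *. pose proof (Rmax_l M 0). pose proof (Rmax_r M 0).
  exists (F y - F x)%C. split; [apply HF; lra|].
  apply HP, Cmod_ball. replace (F y - F x - RtoC 0)%C with (F y + - F x)%C by ring.
  eapply Rle_lt_trans; [apply Cmod_triangle|]. rewrite Cmod_opp.
  pose proof (Heta' x Hx). pose proof (HM y ltac:(lra)). destruct eps; simpl in *; lra.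
Qed.

Lemma is_RInt_0_infty_cauchy (f : R -> C) :
  (forall x y, 0 < x -> 0 < y -> ex_RInt_C f x y) ->
  (forall eps, 0 < eps -> exists eta, 0 < eta /\
     forall x y, 0 < x <= y -> y < eta -> Cmod (RInt_C f x y) < eps) ->
  (forall eps, 0 < eps -> exists M, forall x y, M < x <= y -> Cmod (RInt_C f x y) < eps) ->
  exists I, is_RInt_0_infty f I.
Proof.
  intros Hex H0 Hinf.
  assert (S0 : forall eps, 0 < eps -> exists eta, 0 < eta /\
     forall x y, 0 < x < eta -> 0 < y < eta -> Cmod (RInt_C f x y) < eps).
  { intros eps He. destruct (H0 eps He) as [eta [Heta Hb]]. exists eta. split; auto.
    intros x y Hx Hy. destruct (Rle_lt_dec x y).
    - apply Hb; lra.
    - rewrite <- Cmod_RInt_C_swap by (apply Hex; lra). apply Hb; lra. }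
  assert (Sinf : forall eps, 0 < eps -> exists M, 0 < M /\
     forall x y, M < x -> M < y -> Cmod (RInt_C f x y) < eps).
  { intros eps He. destruct (Hinf eps He) as [M HM]. exists (Rmax M 1).
    pose proof (Rmax_l M 1). pose proof (Rmax_r M 1). split; [lra|].
    intros x y Hx Hy. destruct (Rle_lt_dec x y).
    - apply HM; lra.
    - rewrite <- Cmod_RInt_C_swap by (apply Hex; lra). apply HM; lra. }
  set (F := filter_prod (at_right 0) (Rbar_locally p_infty)).
  set (ff := fun (ab : R * R) (l : C_R_CompleteNormedModule) => is_RInt_C f (fst ab) (snd ab) l).
  assert (Huniq : F (fun ab => (exists l, ff ab l) /\ (forall l1 l2, ff ab l1 -> ff ab l2 -> l1 = l2))).
  { eapply filter_imp; [|apply (filter_prod_0_infty (fun x => 0 < x) (fun y => 0 < y))];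
      [|apply at_right_0_pos | exists 0; auto].
    intros [x y] [Hx Hy]. unfold ff; simpl in *. split.
    - exists (RInt_C f x y). apply (RInt_correct (V := C_R_CompleteNormedModule)), Hex; auto.
    - intros l1 l2 H1 H2.
      rewrite <- (is_RInt_unique (V := C_R_CompleteNormedModule) _ _ _ _ H1).
      apply (is_RInt_unique (V := C_R_CompleteNormedModule) _ _ _ _ H2). }
  destruct (proj1 (filterlimi_locally_cauchy (F := F) (FF := filter_prod_proper_0_infty) ff Huniq))
    as [I HI].
  2: { exists I. exact HI. }
  intros eps.
  assert (He2 : 0 < eps / 2) by (destruct eps; simpl; lra).
  destruct (S0 _ He2) as [eta [Heta Beta]]. destruct (Sinf _ He2) as [M [HM BM]].
  exists (fun ab : R * R => 0 < fst ab < eta /\ M < snd ab). split.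
  - apply (filter_prod_0_infty (fun x => 0 < x < eta) (fun y => M < y));
      [apply at_right_0_lt; auto | exists M; auto].
  - intros [u1 u2] [v1 v2] [Hu1 Hu2] [Hv1 Hv2] u' v' Hu' Hv'. unfold ff in *. simpl in *.
    apply Cmod_ball.
    rewrite <- (is_RInt_unique (V := C_R_CompleteNormedModule) _ _ _ _ Hu'),
            <- (is_RInt_unique (V := C_R_CompleteNormedModule) _ _ _ _ Hv').
    fold (RInt_C f u1 u2) (RInt_C f v1 v2).
    rewrite <- (RInt_C_Chasles f v1 u1 v2), <- (RInt_C_Chasles f u1 u2 v2) by (apply Hex; lra).
    replace (RInt_C f v1 u1 + (RInt_C f u1 u2 + RInt_C f u2 v2) - RInt_C f u1 u2)%C
      with (RInt_C f v1 u1 + RInt_C f u2 v2)%C by ring.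
    eapply Rle_lt_trans; [apply Cmod_triangle|].
    pose proof (Beta v1 u1 ltac:(lra) ltac:(lra)). pose proof (BM u2 v2 ltac:(lra) ltac:(lra)).
    replace (pos eps) with (eps / 2 + eps / 2) by field. lra.
Qed.

Lemma Cmod_is_RInt_0_infty_le (f : R -> C) I B :
  (forall x y, 0 < x -> 0 < y -> ex_RInt_C f x y) ->
  (forall x y, 0 < x <= 1 -> 1 <= y -> Cmod (RInt_C f x y) <= B) ->
  is_RInt_0_infty f I -> Cmod I <= B.
Proof.
  intros Hex HB HI. apply Rle_plus_epsilon. intros eps He.
  set (k := @norm_factor R_AbsRing C_R_NormedModule).
  assert (Hk : 0 < k) by apply norm_factor_gt_0.
  assert (Hek : 0 < eps / k) by (apply Rdiv_lt_0_compat; auto).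
  assert (Hball := HI _ (locally_ball I (mkposreal _ Hek))).
  assert (Hrange := filter_prod_0_infty (fun x => 0 < x < 1) (fun y => 1 < y)
                      (at_right_0_lt 1 Rlt_0_1) (ex_intro _ 1 (fun y H => H))).
  unfold filtermapi in Hball.
  destruct (filter_ex (F := filter_prod (at_right 0) (Rbar_locally p_infty))
              (ProperFilter := filter_prod_proper_0_infty)
              _ (filter_and _ _ Hball Hrange)) as [[x y] [[l [Hl Hlb]] [Hx Hy]]].
  simpl in *.
  apply (norm_compat2 (V := C_R_NormedModule) I l (mkposreal _ Hek)) in Hlb. simpl in Hlb.
  rewrite minus_C, norm_C in Hlb. fold k in Hlb.
  replace (k * (eps / k)) with eps in Hlb by (field; lra).
  rewrite <- (is_RInt_unique (V := C_R_CompleteNormedModule) _ _ _ _ Hl) in Hlb.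
  fold (RInt_C f x y) in Hlb.
  pose proof (HB x y ltac:(lra) ltac:(lra)).
  replace I with (RInt_C f x y - (RInt_C f x y - I))%C by ring.
  eapply Rle_trans; [apply Cmod_triangle|]. rewrite Cmod_opp. unfold RInt_C in *. lra.
Qed.

Section Dominated.

Variables (p b K : R).
Hypotheses (Hp : 0 < p) (Hb : 0 < b) (HK0 : 0 <= K).
Hypothesis HK : forall t, 1 <= t -> Rpower t (p - 1) <= K * exp (b / 2 * t).
Variables (c : R) (f : R -> C).
Hypothesis Hc : 0 <= c.
Hypothesis f_cont : forall t, 0 < t -> continuous (U := C_R_NormedModule) f t.
Hypothesis f_dom : forall t, 0 < t -> Cmod (f t) <= c * (Rpower t (p - 1) * exp (- b * t)).

Let f_int x y : 0 < x -> 0 < y -> ex_RInt_C f x y.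
Proof. intros; apply ex_RInt_C_pos; auto. Qed.

Lemma Cmod_RInt_dominated_near_0 x y : 0 < x <= y -> y <= 1 ->
  Cmod (RInt_C f x y) <= c / p * Rpower y p.
Proof.
  intros Hxy Hy.
  assert (Hpow : forall t, 0 < t -> is_derive (fun u => c / p * Rpower u p) t (c * Rpower t (p - 1))).
  { intros t Ht.
    eapply is_derive_eq; [apply is_derive_scal, is_derive_Reals, derivable_pt_lim_power; auto|].
    simpl. unfold mult; simpl. field. lra. }
  eapply Rle_trans; [apply Cmod_RInt_C_le_antiderivative with
     (G := fun u => c / p * Rpower u p) (g := fun t => c * Rpower t (p - 1))|].
  - lra.
  - intros t Ht. apply Hpow. lra.
  - intros t Ht. apply (ex_derive_continuous (K := R_AbsRing) (V := R_NormedModule)).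
    eexists. apply is_derive_scal, is_derive_Reals, derivable_pt_lim_power. lra.
  - intros t Ht. eapply Rle_trans; [apply f_dom; lra|].
    apply Rmult_le_compat_l; auto.
    rewrite <- (Rmult_1_r (Rpower t (p - 1))) at 2.
    apply Rmult_le_compat_l; [left; apply exp_pos|].
    rewrite <- exp_0. apply exp_le_mono. nra.
  - apply f_int; lra.
  - assert (0 <= c / p * Rpower x p)
      by (apply Rmult_le_pos; [apply Rdiv_le_0_compat; lra | left; apply exp_pos]).
    lra.
Qed.

Lemma Cmod_RInt_dominated_near_infty x y : 1 <= x <= y ->
  Cmod (RInt_C f x y) <= c * K * (2 / b) * exp (- (b / 2) * x).
Proof.
  intros Hxy.
  set (G := fun u => - (c * K * (2 / b)) * exp (- (b / 2) * u)).
  eapply Rle_trans; [apply Cmod_RInt_C_le_antiderivative with (G := G)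
                       (g := fun t => c * K * exp (- (b / 2) * t))|].
  - lra.
  - intros t Ht. unfold G. auto_derive; auto. field. lra.
  - intros t Ht. apply continuity_pt_filterlim, derivable_continuous_pt.
    apply derivable_pt_mult; [apply derivable_pt_const|].
    apply derivable_pt_comp; [apply derivable_pt_scal, derivable_pt_id | apply derivable_pt_exp].
  - intros t Ht. eapply Rle_trans; [apply f_dom; lra|].
    rewrite Rmult_assoc. apply Rmult_le_compat_l; auto.
    apply Rle_trans with (K * exp (b / 2 * t) * exp (- b * t)).
    + apply Rmult_le_compat_r; [left; apply exp_pos | apply HK; lra].
    + rewrite Rmult_assoc, <- exp_plus.
      replace (b / 2 * t + - b * t) with (- (b / 2) * t) by field. lra.
  - apply f_int; lra.
  - assert (0 <= c * K * (2 / b)) by (apply Rmult_le_pos; [nra | left; apply Rdiv_lt_0_compat; lra]).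
    unfold G. pose proof (exp_pos (- (b / 2) * y)). nra.
Qed.

Lemma is_RInt_0_infty_dominated :
  exists I, is_RInt_0_infty f I /\ Cmod I <= c * (1 / p + K * (2 / b) * exp (- (b / 2) * 1)).
Proof.
  assert (HcK : 0 <= c * K * (2 / b))
    by (apply Rmult_le_pos; [nra | left; apply Rdiv_lt_0_compat; lra]).
  destruct (is_RInt_0_infty_cauchy f f_int) as [I HI].
  - intros eps He.
    destruct (Rpower_exp_small_near_0 p 0 Hp (Rle_refl 0) (eps * p / (c + 1))) as [eta [Heta Hsmall]].
    { apply Rdiv_lt_0_compat; nra. }
    exists (Rmin eta 1). split; [apply Rmin_glb_lt; lra|].
    intros x y Hxy Hy. pose proof (Rmin_l eta 1). pose proof (Rmin_r eta 1).
    eapply Rle_lt_trans; [apply Cmod_RInt_dominated_near_0; lra|].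
    specialize (Hsmall y ltac:(lra)). rewrite Ropp_0, Rmult_0_l, exp_0, Rmult_1_r in Hsmall.
    apply Rle_lt_trans with (eps * (c / (c + 1))); [|apply Rmult_frac_lt; auto].
    replace (eps * (c / (c + 1))) with (c / p * (eps * p / (c + 1))) by (field; lra).
    apply Rmult_le_compat_l; [apply Rdiv_le_0_compat|]; lra.
  - intros eps He.
    set (A := c * K * (2 / b)).
    destruct (Rpower_exp_small_near_infty 0 (b / 2) ltac:(lra) (eps / (A + 1))) as [M HM].
    { apply Rdiv_lt_0_compat; unfold A; lra. }
    exists (Rmax M 1). intros x y Hxy. pose proof (Rmax_l M 1). pose proof (Rmax_r M 1).
    eapply Rle_lt_trans; [apply Cmod_RInt_dominated_near_infty; lra|].
    specialize (HM x ltac:(lra)). rewrite Rpower_O, Rmult_1_l in HM by lra.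
    apply Rle_lt_trans with (eps * (A / (A + 1))); [|apply Rmult_frac_lt; unfold A; auto].
    replace (eps * (A / (A + 1))) with (A * (eps / (A + 1))) by (field; unfold A; lra).
    apply Rmult_le_compat_l; [unfold A|]; lra.
  - exists I. split; [exact HI|].
    apply (Cmod_is_RInt_0_infty_le f I); [exact f_int | | exact HI].
    intros x y Hx Hy.
    rewrite <- (RInt_C_Chasles f x 1 y) by (apply f_int; lra).
    eapply Rle_trans; [apply Cmod_triangle|].
    pose proof (Cmod_RInt_dominated_near_0 x 1 ltac:(lra) (Rle_refl 1)).
    pose proof (Cmod_RInt_dominated_near_infty 1 y ltac:(lra)).
    replace (Rpower 1 p) with 1 in * by (unfold Rpower; rewrite ln_1, Rmult_0_r, exp_0; reflexivity).
    replace (c * (1 / p + K * (2 / b) * exp (- (b / 2) * 1)))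
      with (c / p * 1 + c * K * (2 / b) * exp (- (b / 2) * 1)) by (field; lra).
    lra.
Qed.

End Dominated.

End ImproperIntegrals.

(** * The integrals [int_0^oo t^(s-1) e^(-nu t) dt] *)

Definition gamma_kernel (s nu : C) (t : R) : C :=
  (Cpowc (RtoC t) (s - 1) * Cexp (- (nu * RtoC t)))%C.

Definition gamma_int (s nu : C) : C :=
  RInt_gen (V := C_R_CompleteNormedModule) (gamma_kernel s nu) (at_right 0) (Rbar_locally p_infty).

Lemma CGamma_gamma_int (s : C) : CGamma s = gamma_int s (RtoC 1).
Proof.
  unfold CGamma, gamma_int. f_equal. apply functional_extensionality. intros t.
  unfold gamma_kernel. f_equal.
  replace (- (RtoC 1 * RtoC t))%C with (RtoC (- t)) by (rewrite RtoC_opp; ring).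
  symmetry. apply Cexp_RtoC.
Qed.

Lemma is_derive_Cpowc_RtoC (w : C) t : 0 < t ->
  is_derive (V := C_R_NormedModule) (fun u => Cpowc (RtoC u) w) t
    (w * RtoC (/ t) * Cpowc (RtoC t) w)%C.
Proof.
  intros Ht.
  apply is_derive_ext_loc with (f := fun u => Cexp (w * RtoC (ln u))%C).
  - exists (mkposreal t Ht). intros u Hu.
    change (Rabs (u - t) < t) in Hu. apply Rabs_def2 in Hu.
    rewrite Cpowc_RtoC_pos by lra. reflexivity.
  - rewrite Cpowc_RtoC_pos by auto.
    apply is_derive_Cexp, is_derive_Cmult_l, is_derive_C_pair; simpl.
    + apply is_derive_ln; auto.
    + apply (is_derive_const (K := R_AbsRing) (V := R_NormedModule)).
Qed.

Lemma is_derive_gamma_kernel s nu t : 0 < t ->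
  is_derive (V := C_R_NormedModule) (gamma_kernel s nu) t
    ((s - 1) * RtoC (/ t) * gamma_kernel s nu t - nu * gamma_kernel s nu t)%C.
Proof.
  intros Ht. unfold gamma_kernel.
  eapply is_derive_eq; [apply is_derive_Cmult; [apply is_derive_Cpowc_RtoC; auto|]|].
  - apply is_derive_ext with (f := fun u => Cexp (RtoC u * (- nu) + 0)%C);
      [intros u; f_equal; ring|].
    apply is_derive_Cexp, is_derive_C_affine.
  - cbv beta. C_eq. replace (RtoC t * - nu + 0)%C with (- (nu * RtoC t))%C by ring. ring.
Qed.

Lemma continuous_gamma_kernel s nu t : 0 < t ->
  continuous (U := C_R_NormedModule) (gamma_kernel s nu) t.
Proof.
  intros Ht. apply (ex_derive_continuous (K := R_AbsRing) (V := C_R_NormedModule)).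
  eexists. apply is_derive_gamma_kernel; auto.
Qed.

Lemma Cmod_gamma_kernel s nu t : 0 < t ->
  Cmod (gamma_kernel s nu t) = Rpower t (Re s - 1) * exp (- Re nu * t).
Proof.
  intros Ht. unfold gamma_kernel. rewrite Cmod_mult, Cmod_Cpowc_RtoC, Cmod_Cexp by auto.
  destruct s, nu. simpl. f_equal; f_equal; ring.
Qed.

Lemma is_RInt_gamma_int s nu : 0 < Re s -> 0 < Re nu ->
  is_RInt_0_infty (gamma_kernel s nu) (gamma_int s nu).
Proof.
  intros Hs Hnu.
  destruct (Rpower_le_exp (Re s - 1) (Re nu / 2)) as [K [HK HKb]]; [lra|].
  destruct (is_RInt_0_infty_dominated (Re s) (Re nu) K Hs Hnu ltac:(lra) HKb 1 (gamma_kernel s nu))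
    as [I [HI _]].
  - lra.
  - intros; apply continuous_gamma_kernel; auto.
  - intros t Ht. rewrite Cmod_gamma_kernel by auto. lra.
  - unfold gamma_int. rewrite (is_RInt_0_infty_RInt_gen _ _ HI). exact HI.
Qed.

Lemma gamma_kernel_add1 s nu t : 0 < t ->
  gamma_kernel (s + 1) nu t = (RtoC t * gamma_kernel s nu t)%C.
Proof.
  intros Ht. unfold gamma_kernel.
  replace (s + 1 - 1)%C with (s - 1 + 1)%C by ring.
  rewrite Cpowc_RtoC_add1 by auto. ring.
Qed.

(* Integration by parts: [t^s e^(-nu t)] vanishes at both ends. *)
Lemma gamma_int_rec s nu : 0 < Re s -> 0 < Re nu ->
  (nu * gamma_int (s + 1) nu = s * gamma_int s nu)%C.
Proof.
  intros Hs Hnu.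
  assert (Hs1 : 0 < Re (s + 1)%C) by (destruct s; simpl in *; lra).
  set (h := fun t => (s * gamma_kernel s nu t + (- nu) * gamma_kernel (s + 1) nu t)%C).
  assert (Hd : forall t, 0 < t -> is_derive (V := C_R_NormedModule) (gamma_kernel (s + 1) nu) t (h t)).
  { intros t Ht. eapply is_derive_eq; [apply is_derive_gamma_kernel; auto|].
    unfold h. rewrite (gamma_kernel_add1 s nu t Ht) at 1.
    replace (s + 1 - 1)%C with s by ring.
    assert (RtoC t <> RtoC 0) by (apply RtoC_neq0; lra).
    C_eq. rewrite RtoC_inv by lra. field. auto. }
  assert (Hh : is_RInt_0_infty h (s * gamma_int s nu + (- nu) * gamma_int (s + 1) nu)%C).
  { apply is_RInt_0_infty_plus; apply is_RInt_0_infty_mult_l, is_RInt_gamma_int; auto. }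
  assert (Hh0 : is_RInt_0_infty h (RtoC 0)).
  { apply (is_RInt_0_infty_derive_vanishing (gamma_kernel (s + 1) nu)).
    - intros x y Hx Hy.
      assert (Hxy : forall z, Rmin x y <= z <= Rmax x y -> 0 < z)
        by (intros z [Hz _]; eapply Rlt_le_trans; [|exact Hz]; apply Rmin_glb_lt; auto).
      apply (is_RInt_derive (V := C_R_CompleteNormedModule)); [intros; apply Hd; auto|].
      intros z Hz. apply (ex_derive_continuous (K := R_AbsRing) (V := C_R_NormedModule)).
      eexists. apply is_derive_Cplus; apply is_derive_Cmult_l, is_derive_gamma_kernel; auto.
    - intros eps He.
      destruct (Rpower_exp_small_near_0 (Re s) (Re nu) Hs ltac:(lra) eps He) as [eta [Heta Hsmall]].
      exists eta. split; auto. intros x Hx.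
      rewrite Cmod_gamma_kernel by lra.
      replace (Re (s + 1)%C - 1) with (Re s) by (destruct s; simpl; ring).
      auto.
    - intros eps He.
      destruct (Rpower_exp_small_near_infty (Re s) (Re nu) Hnu eps He) as [M HM].
      exists (Rmax M 0). intros y Hy. pose proof (Rmax_l M 0). pose proof (Rmax_r M 0).
      rewrite Cmod_gamma_kernel by lra.
      replace (Re (s + 1)%C - 1) with (Re s) by (destruct s; simpl; ring).
      apply HM. lra. }
  pose proof (is_RInt_0_infty_unique _ _ _ Hh Hh0) as E.
  replace (nu * gamma_int (s + 1) nu)%C
    with (s * gamma_int s nu - (s * gamma_int s nu + - nu * gamma_int (s + 1) nu))%C by ring.
  rewrite E. ring.
Qed.

Lemma gamma_int_shift s nu n : 0 < Re s -> 0 < Re nu ->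
  (gamma_int (s + RtoC (INR n)) nu * nu ^ n = poch s n * gamma_int s nu)%C.
Proof.
  intros Hs Hnu. induction n as [|n IH].
  - simpl. replace (s + RtoC 0)%C with s by ring. ring.
  - assert (Hsn : 0 < Re (s + RtoC (INR n))%C) by (pose proof (pos_INR n); destruct s; simpl in *; lra).
    replace (s + RtoC (INR (S n)))%C with (s + RtoC (INR n) + 1)%C by (rewrite S_INR, RtoC_plus; ring).
    rewrite Cpow_S. simpl poch.
    replace (gamma_int (s + RtoC (INR n) + 1) nu * (nu * nu ^ n))%C
      with ((nu * gamma_int (s + RtoC (INR n) + 1) nu) * nu ^ n)%C by ring.
    rewrite gamma_int_rec by auto.
    replace ((s + RtoC (INR n)) * gamma_int (s + RtoC (INR n)) nu * nu ^ n)%C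
      with ((s + RtoC (INR n)) * (gamma_int (s + RtoC (INR n)) nu * nu ^ n))%C by ring.
    rewrite IH. ring.
Qed.

Lemma Cmod_gamma_kernel_taylor s nu0 d t : 0 < t -> Cmod d <= Re nu0 / 2 ->
  Cmod (gamma_kernel s (nu0 + d) t + (- (1)) * gamma_kernel s nu0 t + d * gamma_kernel (s + 1) nu0 t)%C
  <= Cmod d ^ 2 * (Rpower t (Re s + 2 - 1) * exp (- (Re nu0 / 2) * t)).
Proof.
  intros Ht Hd.
  assert (Eg : (gamma_kernel s (nu0 + d) t + (- (1)) * gamma_kernel s nu0 t
                + d * gamma_kernel (s + 1) nu0 t)%C
               = (gamma_kernel s nu0 t * (Cexp (- (d * RtoC t)) - 1 + d * RtoC t))%C).
  { rewrite gamma_kernel_add1 by auto. unfold gamma_kernel.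
    replace (- ((nu0 + d) * RtoC t))%C with (- (nu0 * RtoC t) + - (d * RtoC t))%C by ring.
    rewrite Cexp_add. ring. }
  rewrite Eg, Cmod_mult, Cmod_gamma_kernel by auto.
  pose proof (Cmod_Cexp_opp_taylor (d * RtoC t)) as T.
  rewrite Cmod_mult, Cmod_R, Rabs_pos_eq in T by lra.
  assert (Hdt : Cmod d * t <= Re nu0 / 2 * t) by (apply Rmult_le_compat_r; lra).
  replace (Rpower t (Re s + 2 - 1)) with (Rpower t (Re s - 1) * t ^ 2)
    by (rewrite <- Rpower_pow, <- Rpower_plus by auto; f_equal; simpl; ring).
  assert (Hexp : exp (- Re nu0 * t) * exp (Cmod d * t) <= exp (- (Re nu0 / 2) * t))
    by (rewrite <- exp_plus; apply exp_le_mono; lra).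
  assert (0 <= Rpower t (Re s - 1)) by (left; apply exp_pos).
  assert (0 <= Cmod d ^ 2 * t ^ 2) by (apply Rmult_le_pos; apply pow2_ge_0).
  apply Rle_trans with
    (Rpower t (Re s - 1) * exp (- Re nu0 * t) * ((Cmod d * t) ^ 2 * exp (Cmod d * t))).
  { apply Rmult_le_compat_l; auto. apply Rmult_le_pos; left; apply exp_pos. }
  replace (Rpower t (Re s - 1) * exp (- Re nu0 * t) * ((Cmod d * t) ^ 2 * exp (Cmod d * t)))
    with ((Rpower t (Re s - 1) * (Cmod d ^ 2 * t ^ 2)) * (exp (- Re nu0 * t) * exp (Cmod d * t)))
    by ring.
  replace (Cmod d ^ 2 * (Rpower t (Re s - 1) * t ^ 2 * exp (- (Re nu0 / 2) * t)))
    with ((Rpower t (Re s - 1) * (Cmod d ^ 2 * t ^ 2)) * exp (- (Re nu0 / 2) * t)) by ring.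
  apply Rmult_le_compat_l; auto. apply Rmult_le_pos; auto.
Qed.

Lemma gamma_int_taylor s nu0 : 0 < Re s -> 0 < Re nu0 -> exists Cst, 0 <= Cst /\
  forall d : C, Cmod d <= Re nu0 / 2 ->
  Cmod (gamma_int s (nu0 + d) - gamma_int s nu0 + d * gamma_int (s + 1) nu0)%C <= Cst * Cmod d ^ 2.
Proof.
  intros Hs Ha.
  set (p := Re s + 2). set (b := Re nu0 / 2).
  destruct (Rpower_le_exp (p - 1) (b / 2)) as [K [HK HKb]]; [unfold b; lra|].
  assert (HB : 0 < 1 / p + K * (2 / b) * exp (- (b / 2) * 1)).
  { assert (0 < 1 / p) by (apply Rdiv_lt_0_compat; unfold p; lra).
    assert (0 < 2 / b) by (apply Rdiv_lt_0_compat; unfold b; lra).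
    pose proof (exp_pos (- (b / 2) * 1)).
    assert (0 < K * (2 / b) * exp (- (b / 2) * 1))
      by (apply Rmult_lt_0_compat; [apply Rmult_lt_0_compat|]; auto).
    lra. }
  exists (1 / p + K * (2 / b) * exp (- (b / 2) * 1)). split; [lra|].
  intros d Hd.
  assert (Hnd : 0 < Re (nu0 + d)%C).
  { unfold b in Hd. pose proof (re_le_Cmod d). pose proof (Rle_abs (- Re d)). rewrite Rabs_Ropp in *.
    destruct nu0, d. simpl in *. lra. }
  assert (Hs1 : 0 < Re (s + 1)%C) by (destruct s; simpl in *; lra).
  set (g := fun t => (gamma_kernel s (nu0 + d) t + (- (1)) * gamma_kernel s nu0 t
                      + d * gamma_kernel (s + 1) nu0 t)%C).
  assert (Hg : is_RInt_0_infty g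
                 (gamma_int s (nu0 + d) - gamma_int s nu0 + d * gamma_int (s + 1) nu0)%C).
  { replace (gamma_int s (nu0 + d) - gamma_int s nu0 + d * gamma_int (s + 1) nu0)%C with
      (gamma_int s (nu0 + d) + (- (1)) * gamma_int s nu0 + d * gamma_int (s + 1) nu0)%C by ring.
    apply is_RInt_0_infty_plus; [apply is_RInt_0_infty_plus|].
    - apply is_RInt_gamma_int; auto.
    - apply is_RInt_0_infty_mult_l, is_RInt_gamma_int; auto.
    - apply is_RInt_0_infty_mult_l, is_RInt_gamma_int; auto. }
  destruct (is_RInt_0_infty_dominated p b K ltac:(unfold p; lra) ltac:(unfold b; lra)
              ltac:(lra) HKb (Cmod d ^ 2) g (pow2_ge_0 _)) as [I [HI HIb]].
  - intros t Ht. unfold g. apply (ex_derive_continuous (K := R_AbsRing) (V := C_R_NormedModule)).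
    eexists. apply is_derive_Cplus; [apply is_derive_Cplus|].
    + apply is_derive_gamma_kernel; auto.
    + apply is_derive_Cmult_l, is_derive_gamma_kernel; auto.
    + apply is_derive_Cmult_l, is_derive_gamma_kernel; auto.
  - intros t Ht. apply Cmod_gamma_kernel_taylor; auto.
  - rewrite <- (is_RInt_0_infty_unique _ _ _ HI Hg). lra.
Qed.

Lemma is_derive_C_of_quadratic_remainder (F : R -> C) (x0 : R) (D : C) (r Cst : R) :
  0 < r -> 0 <= Cst ->
  (forall x, Rabs (x - x0) < r -> Cmod (F x - F x0 - RtoC (x - x0) * D)%C <= Cst * (x - x0) ^ 2) ->
  is_derive (V := C_R_NormedModule) F x0 D.
Proof.
  intros Hr HC HF. split; [apply is_linear_scal_l|].
  intros x Hx.
  apply (is_filter_lim_locally_unique (K := R_AbsRing) (V := AbsRing_NormedModule R_AbsRing)) in Hx.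
  subst x. intros eps.
  assert (Hd : 0 < Rmin r (eps / (Cst + 1)))
    by (apply Rmin_glb_lt; [|apply Rdiv_lt_0_compat; [apply cond_pos|]]; lra).
  exists (mkposreal _ Hd). intros y Hy. change (Rabs (y - x0) < Rmin r (eps / (Cst + 1))) in Hy.
  pose proof (Rmin_l r (eps / (Cst + 1))). pose proof (Rmin_r r (eps / (Cst + 1))).
  rewrite scal_C, !minus_C, norm_C. change (norm (minus y x0)) with (Rabs (y - x0)).
  eapply Rle_trans; [apply HF; lra|].
  rewrite <- Rsqr_pow2, (Rsqr_abs (y - x0)). unfold Rsqr. rewrite <- Rmult_assoc.
  apply Rmult_le_compat_r; [apply Rabs_pos|].
  apply Rle_trans with (Cst * (eps / (Cst + 1))); [apply Rmult_le_compat_l; lra|].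
  replace (Cst * (eps / (Cst + 1))) with (eps * (Cst / (Cst + 1))) by (field; lra).
  left. apply Rmult_frac_lt; auto. apply cond_pos.
Qed.

Definition segment_from_1 (mu : C) (l : R) : C := (RtoC l * (mu - 1) + 1)%C.

Lemma is_derive_gamma_int_segment s mu l0 : 0 < Re s -> 0 < Re (segment_from_1 mu l0) ->
  is_derive (V := C_R_NormedModule) (fun l => gamma_int s (segment_from_1 mu l)) l0
    (- (mu - 1) * gamma_int (s + 1) (segment_from_1 mu l0))%C.
Proof.
  intros Hs Hn.
  set (nu0 := segment_from_1 mu l0) in *.
  destruct (gamma_int_taylor s nu0 Hs Hn) as [Cst [HC HT]].
  set (c := Cmod (mu - 1)%C).
  assert (Hc : 0 <= c) by apply Cmod_ge_0.
  apply is_derive_C_of_quadratic_remainder with (r := Re nu0 / (2 * (c + 1))) (Cst := Cst * c ^ 2).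
  - apply Rdiv_lt_0_compat; lra.
  - apply Rmult_le_pos; [|apply pow2_ge_0]; auto.
  - intros x Hx. cbv beta. fold nu0. set (d := (RtoC (x - l0) * (mu - 1))%C).
    assert (Hdc : Cmod d = Rabs (x - l0) * c) by (unfold d; rewrite Cmod_mult, Cmod_R; reflexivity).
    replace (segment_from_1 mu x) with (nu0 + d)%C
      by (unfold nu0, d, segment_from_1; rewrite RtoC_minus; ring).
    replace (gamma_int s (nu0 + d) - gamma_int s nu0
             - RtoC (x - l0) * (- (mu - 1) * gamma_int (s + 1) nu0))%C
      with (gamma_int s (nu0 + d) - gamma_int s nu0 + d * gamma_int (s + 1) nu0)%C by (unfold d; ring).
    eapply Rle_trans; [apply HT|].
    + rewrite Hdc.
      apply Rle_trans with (Re nu0 / (2 * (c + 1)) * c); [apply Rmult_le_compat_r; lra|].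
      replace (Re nu0 / (2 * (c + 1)) * c) with (Re nu0 / 2 * (c / (c + 1))) by (field; lra).
      left. apply Rmult_frac_lt; lra.
    + rewrite Hdc, <- !Rsqr_pow2, (Rsqr_abs (x - l0)). unfold Rsqr. right. ring.
Qed.

Lemma ln_sqrt (x : R) : 0 <= x -> ln (sqrt x) = ln x / 2.
Proof.
  intros Hx. destruct (Req_dec x 0) as [-> | Hx0].
  - rewrite sqrt_0. unfold ln. destruct (Rlt_dec 0 0) as [H0 | _]; [exfalso; lra | field].
  - assert (0 < sqrt x) by (apply sqrt_lt_R0; lra).
    rewrite <- (sqrt_sqrt x) at 2 by lra. rewrite ln_mult by auto. field.
Qed.

(* A branch of [log (segment_from_1 mu l)] along the segment, which stays in the
   right half-plane; it agrees with [Clog] there (see [Clog_Re_pos]). *)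
Definition segment_log (mu : C) (l : R) : C :=
  (ln (Cmod (segment_from_1 mu l)), atan (Im (segment_from_1 mu l) / Re (segment_from_1 mu l))).

Lemma is_derive_segment_log mu l : 0 < Re (segment_from_1 mu l) ->
  is_derive (V := C_R_NormedModule) (segment_log mu) l ((mu - 1) / segment_from_1 mu l)%C.
Proof.
  destruct mu as [p q]. unfold segment_log, segment_from_1. simpl. intros Hx.
  set (S := (l * (p - 1) + 1) ^ 2 + (l * q) ^ 2).
  assert (HS : 0 < S) by (unfold S; pose proof (pow2_ge_0 (l * q)); pose proof (pow_lt _ 2 Hx); lra).
  assert (ES : S = (l * (p - 1) + 1) * (l * (p - 1) + 1) + l * q * (l * q)) by (unfold S; ring).
  apply is_derive_eq with
    (l := (((p - 1) * (l * (p - 1) + 1) + q * (l * q)) / S, q / S) : C).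
  - apply is_derive_C_pair.
    + apply is_derive_ext with (f := fun u => ln ((u * (p - 1) + 1) ^ 2 + (u * q) ^ 2) / 2).
      { intros u. unfold Cmod. rewrite ln_sqrt by (apply Rplus_le_le_0_compat; apply pow2_ge_0).
        simpl. f_equal. f_equal. ring. }
      auto_derive; [simpl; lra|].
      rewrite ES. simpl. field. lra.
    + apply is_derive_ext with (f := fun u => atan ((u * q) / (u * (p - 1) + 1))).
      { intros u. simpl. f_equal. f_equal; ring. }
      auto_derive; [lra|].
      rewrite ES. field. lra.
  - unfold Cdiv, Cinv. apply injective_projections; simpl; rewrite ES; field; lra.
Qed.

Lemma Re_segment_from_1_pos mu l : 0 < Re mu -> 0 <= l <= 1 -> 0 < Re (segment_from_1 mu l).
Proof.
  intros Hmu Hl. destruct mu as [p q]. unfold segment_from_1. simpl in *.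
  destruct (Rle_dec p 1); nra.
Qed.

(* Along the segment from [1] to [mu], [gamma_int s nu * exp (s log nu)] has zero derivative:
   this is [gamma_int_rec] combined with [is_derive_gamma_int_segment]. *)
Lemma gamma_int_scale s mu : 0 < Re s -> 0 < Re mu ->
  gamma_int s mu = (gamma_int s (RtoC 1) / Cpowc mu s)%C.
Proof.
  intros Hs Hmu.
  set (h := fun l => (gamma_int s (segment_from_1 mu l) * Cexp (s * segment_log mu l))%C).
  assert (Hd : forall l, 0 <= l <= 1 -> is_derive (V := C_R_NormedModule) h l (RtoC 0)).
  { intros l Hl. pose proof (Re_segment_from_1_pos mu l Hmu Hl) as Hp.
    eapply is_derive_eq; [apply is_derive_Cmult|].
    - apply is_derive_gamma_int_segment; auto.
    - apply is_derive_Cexp, is_derive_Cmult_l, is_derive_segment_log. auto.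
    - assert (Hn : segment_from_1 mu l <> RtoC 0) by (intros E; rewrite E in Hp; simpl in Hp; lra).
      pose proof (gamma_int_rec s (segment_from_1 mu l) Hs Hp) as Hr. cbv beta.
      set (E := Cexp (s * segment_log mu l)%C). set (nu := segment_from_1 mu l) in *.
      C_eq.
      replace (- (mu - 1) * gamma_int (s + 1) nu * E + gamma_int s nu * (s * ((mu - 1) / nu) * E))%C
        with ((mu - 1) * E * ((s * gamma_int s nu) - nu * gamma_int (s + 1) nu) / nu)%C
        by (field; auto).
      rewrite Hr. field. auto. }
  assert (Hconst : h 1 = h 0).
  { assert (Hle := Cmod_sub_le_of_derive h (fun _ => RtoC 0) 0 1 0 ltac:(lra) Hd
                     (fun x _ => continuous_const _ x) (fun x _ => Req_le _ _ Cmod_0)).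
    rewrite Rmult_0_r in Hle. pose proof (Cmod_ge_0 (h 1 - h 0)%C).
    assert (E0 : (h 1 - h 0)%C = RtoC 0) by (apply Cmod_eq_0; lra).
    replace (h 1) with (h 1 - h 0 + h 0)%C by ring. rewrite E0. ring. }
  assert (S1 : segment_from_1 mu 1 = mu) by (unfold segment_from_1; C_eq; ring).
  assert (S0 : segment_from_1 mu 0 = RtoC 1) by (unfold segment_from_1; C_eq; ring).
  assert (L1 : segment_log mu 1 = Clog mu)
    by (unfold segment_log; rewrite S1; symmetry; apply Clog_Re_pos; auto).
  assert (L0 : segment_log mu 0 = RtoC 0).
  { unfold segment_log. rewrite S0, Cmod_1, ln_1. simpl.
    unfold Rdiv. rewrite Rmult_0_l, atan_0. reflexivity. }
  unfold h in Hconst. rewrite S1, S0, L1, L0, Cmult_0_r, Cexp_0, Cmult_1_r in Hconst.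
  fold (Cpowc mu s) in Hconst.
  assert (Hne : Cpowc mu s <> RtoC 0) by apply Cexp_neq0.
  rewrite <- Hconst. C_eq. field. auto.
Qed.

(** * The Pfaff-Saalschuetz sum *)

Lemma sum_Sn_C (f : nat -> C) n : sum_n f (S n) = (sum_n f n + f (S n))%C.
Proof. rewrite sum_Sn. reflexivity. Qed.

Lemma poch_neq0 (a : C) n :
  (forall j, (j < n)%nat -> (a + RtoC (INR j))%C <> RtoC 0) -> poch a n <> RtoC 0.
Proof.
  induction n as [|n IH]; intros H; simpl.
  - apply RtoC_neq0. lra.
  - apply Cmult_neq_0; [apply IH; intros j Hj|]; apply H; lia.
Qed.

Section PfaffSaalschutz.

Variables (a b : C) (k : nat).
Hypothesis Hk : (1 <= k)%nat.
Hypothesis Hc : forall j : nat, (1 + a + b + RtoC (INR k) + RtoC (INR j))%C <> RtoC 0.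

(* [saal_term m n] is the [n]-th term of [3F2(-m, a, b; -m-k, 1+a+b+k; 1)]. *)
Definition saal_term (m n : nat) : C :=
  (poch (RtoC (- INR m)) n * poch a n /
     (poch (RtoC (- INR m - INR k)) n * poch (1 + a + b + RtoC (INR k)) n)
   * poch b n / RtoC (INR (Factorial.fact n)))%C.

Definition saal_value (m : nat) : C :=
  (poch (1 + a + RtoC (INR k)) m * poch (1 + b + RtoC (INR k)) m /
   (poch (1 + RtoC (INR k)) m * poch (1 + a + b + RtoC (INR k)) m))%C.

Lemma saal_term_0 m : saal_term m 0 = RtoC 1.
Proof. unfold saal_term. simpl. field. Qed.

Lemma saal_term_succ m n : (n < m + k)%nat ->
  saal_term m (S n) =
    (saal_term m n * ((RtoC (INR n) - RtoC (INR m)) * (a + RtoC (INR n)) * (b + RtoC (INR n))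
     / ((RtoC (INR n) - RtoC (INR m) - RtoC (INR k)) * (1 + a + b + RtoC (INR k) + RtoC (INR n))
        * (RtoC (INR n) + 1))))%C.
Proof.
  intros Hn.
  assert (P1 : poch (RtoC (- INR m - INR k)) n <> RtoC 0).
  { apply poch_neq0. intros j Hj. neq0_by_Re.
    assert (INR j < INR m + INR k) by (rewrite <- plus_INR; apply lt_INR; lia). lra. }
  assert (P2 : poch (1 + a + b + RtoC (INR k)) n <> RtoC 0) by (apply poch_neq0; intros; apply Hc).
  assert (P3 : RtoC (INR (Factorial.fact n)) <> RtoC 0) by (apply RtoC_neq0, INR_fact_neq_0).
  assert (P4 : (RtoC (INR n) - RtoC (INR m) - RtoC (INR k))%C <> RtoC 0).
  { neq0_by_Re. assert (INR n < INR m + INR k) by (rewrite <- plus_INR; apply lt_INR; lia). lra. }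
  assert (P5 := Hc n).
  assert (P6 : (RtoC (INR n) + 1)%C <> RtoC 0) by (neq0_by_Re; pose proof (pos_INR n); lra).
  unfold saal_term. simpl poch.
  rewrite fact_simpl, mult_INR, RtoC_mult, S_INR, RtoC_plus.
  rewrite !RtoC_minus, !RtoC_opp.
  rewrite !RtoC_minus, !RtoC_opp in P1.
  field. repeat split; auto.
Qed.

Lemma saal_term_contiguous m n : (n <= m + 1)%nat ->
  (saal_term (S m) n * (RtoC (INR m) + 1 - RtoC (INR n)) * (RtoC (INR m) + RtoC (INR k) + 1)
   = saal_term m n * (RtoC (INR m) + 1) * (RtoC (INR m) + RtoC (INR k) + 1 - RtoC (INR n)))%C.
Proof.
  induction n; intros Hn.
  - rewrite !saal_term_0. simpl. ring.
  - assert (Hn' : (n <= m)%nat) by lia.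
    specialize (IHn ltac:(lia)).
    assert (HmK : 1 <= INR k) by (apply (le_INR 1); lia).
    assert (Hnm : INR n <= INR m) by (apply le_INR; lia).
    pose proof (pos_INR n). pose proof (pos_INR m).
    assert (Q1 : (RtoC (INR m) + 1 - RtoC (INR n))%C <> RtoC 0) by (neq0_by_Re; lra).
    assert (Q2 : (RtoC (INR m) + RtoC (INR k) + 1)%C <> RtoC 0) by (neq0_by_Re; lra).
    assert (E : saal_term (S m) n =
      (saal_term m n * (RtoC (INR m) + 1) * (RtoC (INR m) + RtoC (INR k) + 1 - RtoC (INR n))
                 / ((RtoC (INR m) + 1 - RtoC (INR n)) * (RtoC (INR m) + RtoC (INR k) + 1)))%C).
    { rewrite <- IHn. field. auto. }
    rewrite (saal_term_succ (S m) n) by lia.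
    rewrite (saal_term_succ m n) by lia.
    rewrite E. rewrite !S_INR, !RtoC_plus.
    assert (Q3 : (RtoC (INR n) - (RtoC (INR m) + 1) - RtoC (INR k))%C <> RtoC 0) by (neq0_by_Re; lra).
    assert (Q4 : (RtoC (INR n) - RtoC (INR m) - RtoC (INR k))%C <> RtoC 0) by (neq0_by_Re; lra).
    assert (Q5 := Hc n).
    assert (Q6 : (RtoC (INR n) + 1)%C <> RtoC 0) by (neq0_by_Re; lra).
    C_eq. field. repeat split; auto.
Qed.

Lemma saal_partial_sum_succ m N : (N <= m)%nat ->
  sum_n (saal_term (S m)) N =
   ((1 + a + RtoC (INR k) + RtoC (INR m)) * (1 + b + RtoC (INR k) + RtoC (INR m))
     / ((1 + RtoC (INR k) + RtoC (INR m)) * (1 + a + b + RtoC (INR k) + RtoC (INR m)))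
    * sum_n (saal_term m) N
    - (a + RtoC (INR N)) * (b + RtoC (INR N)) * saal_term m N
      / ((RtoC (INR m) + RtoC (INR k) + 1) * (1 + a + b + RtoC (INR k) + RtoC (INR m))))%C.
Proof.
  assert (HmK : 1 <= INR k) by (apply (le_INR 1); lia).
  pose proof (pos_INR m).
  assert (R1 : (1 + RtoC (INR k) + RtoC (INR m))%C <> RtoC 0) by (neq0_by_Re; lra).
  assert (R2 : (RtoC (INR m) + RtoC (INR k) + 1)%C <> RtoC 0) by (neq0_by_Re; lra).
  assert (R3 := Hc m).
  induction N; intros HN.
  - rewrite !sum_O, !saal_term_0. simpl. C_eq. field. repeat split; auto.
  - specialize (IHN ltac:(lia)).
    rewrite !sum_Sn_C, IHN.
    assert (HNm : INR N + 1 <= INR m) by (rewrite <- S_INR; apply le_INR; lia).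
    pose proof (pos_INR N).
    assert (Sh := saal_term_contiguous m (S N) ltac:(lia)).
    rewrite S_INR, RtoC_plus in Sh.
    assert (Q1 : (RtoC (INR m) + 1 - (RtoC (INR N) + 1))%C <> RtoC 0) by (neq0_by_Re; lra).
    assert (E : saal_term (S m) (S N) =
      (saal_term m (S N) * (RtoC (INR m) + 1) * (RtoC (INR m) + RtoC (INR k) + 1 - (RtoC (INR N) + 1))
                 / ((RtoC (INR m) + 1 - (RtoC (INR N) + 1)) * (RtoC (INR m) + RtoC (INR k) + 1)))%C).
    { rewrite <- Sh. field. auto. }
    rewrite E. rewrite (saal_term_succ m N) by lia.
    rewrite S_INR, RtoC_plus.
    assert (Q4 : (RtoC (INR N) - RtoC (INR m) - RtoC (INR k))%C <> RtoC 0) by (neq0_by_Re; lra).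
    assert (Q5 := Hc N).
    assert (Q6 : (RtoC (INR N) + 1)%C <> RtoC 0) by (neq0_by_Re; lra).
    C_eq. field. repeat split; auto.
Qed.

Theorem pfaff_saalschutz m : sum_n (saal_term m) m = saal_value m.
Proof.
  assert (HmK : 1 <= INR k) by (apply (le_INR 1); lia).
  induction m.
  - rewrite sum_O, saal_term_0. unfold saal_value. simpl. C_eq. field.
  - pose proof (pos_INR m).
    rewrite sum_Sn_C, (saal_partial_sum_succ m m (le_n m)), IHm.
    assert (Sh := saal_term_contiguous m m ltac:(lia)).
    assert (R2 : (RtoC (INR m) + RtoC (INR k) + 1)%C <> RtoC 0) by (neq0_by_Re; lra).
    assert (E : saal_term (S m) m = (saal_term m m * (RtoC (INR m) + 1) * (RtoC (INR k) + 1)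
                 / (RtoC (INR m) + RtoC (INR k) + 1))%C).
    { replace (saal_term (S m) m) with
        (saal_term (S m) m * (RtoC (INR m) + 1 - RtoC (INR m)) * (RtoC (INR m) + RtoC (INR k) + 1)
         / (RtoC (INR m) + RtoC (INR k) + 1))%C by (field; auto).
      rewrite Sh. field. auto. }
    rewrite (saal_term_succ (S m) m) by lia.
    rewrite E.
    unfold saal_value. simpl poch. rewrite !S_INR, !RtoC_plus.
    assert (R1 : (1 + RtoC (INR k) + RtoC (INR m))%C <> RtoC 0) by (neq0_by_Re; lra).
    assert (R3 := Hc m).
    assert (P1 : poch (1 + RtoC (INR k)) m <> RtoC 0).
    { apply poch_neq0. intros j Hj. neq0_by_Re. pose proof (pos_INR j). lra. }
    assert (P2 : poch (1 + a + b + RtoC (INR k)) m <> RtoC 0) by (apply poch_neq0; intros; apply Hc).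
    assert (Q3 : (RtoC (INR m) - (RtoC (INR m) + 1) - RtoC (INR k))%C <> RtoC 0) by (neq0_by_Re; lra).
    assert (Q6 : (RtoC (INR m) + 1)%C <> RtoC 0) by (neq0_by_Re; lra).
    C_eq. field. repeat split; auto.
Qed.

End PfaffSaalschutz.

(** * Term-by-term integration *)

Lemma sum_n_Cmult_l (a : C) (u : nat -> C) N :
  sum_n (fun n => (a * u n)%C) N = (a * sum_n u N)%C.
Proof. apply (sum_n_mult_l (K := C_Ring)). Qed.

Lemma is_RInt_0_infty_gamma_kernel_poly (s mu : C) (c : nat -> C) N : 0 < Re s -> 0 < Re mu ->
  is_RInt_0_infty
    (fun t => (gamma_kernel s mu t * sum_n (fun n => c n * (mu * RtoC t) ^ n) N)%C)
    (gamma_int s mu * sum_n (fun n => c n * poch s n) N)%C.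
Proof.
  intros Hs Hmu.
  replace (gamma_int s mu * sum_n (fun n => c n * poch s n) N)%C
    with (sum_n (fun n => c n * mu ^ n * gamma_int (s + RtoC (INR n)) mu) N)%C.
  2: { rewrite <- sum_n_Cmult_l. apply sum_n_ext. intros n.
       transitivity (c n * (gamma_int (s + RtoC (INR n)) mu * mu ^ n))%C; [C_eq; ring|].
       rewrite gamma_int_shift by auto. C_eq. ring. }
  apply is_RInt_0_infty_ext with
    (f := fun t => sum_n (fun n => (c n * mu ^ n * gamma_kernel (s + RtoC (INR n)) mu t)%C) N).
  - intros t Ht. rewrite <- sum_n_Cmult_l. apply sum_n_ext. intros n.
    unfold gamma_kernel.
    replace (s + RtoC (INR n) - 1)%C with (s - 1 + RtoC (INR n))%C by (C_eq; ring).
    rewrite Cpowc_RtoC_add_nat, Cpow_mult_l, <- RtoC_pow by auto. C_eq. ring.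
  - apply is_RInt_0_infty_sum. intros n _.
    apply is_RInt_0_infty_mult_l, is_RInt_gamma_int; auto.
    pose proof (pos_INR n). destruct s; simpl in *; lra.
Qed.

Lemma not_in_Z0minus_add_nat (z : C) :
  ~ in_Z0minus z -> forall j : nat, (z + RtoC (INR j))%C <> RtoC 0.
Proof.
  intros Hz j E. apply Hz. exists j.
  replace z with (z + RtoC (INR j) - RtoC (INR j))%C by (C_eq; ring).
  rewrite E, RtoC_opp. C_eq. ring.
Qed.

Theorem mainTheorem19 (m k : nat) (alpha beta mu : C) :
  (1 <= m)%nat -> (1 <= k)%nat ->
  ~ in_Z0minus alpha ->
  ~ in_Z0minus (1 + alpha + beta + RtoC (INR k))%C ->
  0 < Re beta -> 0 < Re mu ->
  is_RInt_gen (V := C_R_NormedModule)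
    (fun t : R =>
       (Cpowc (RtoC t) (beta - 1) * Cexp (- (mu * RtoC t))
        * F22_trunc (RtoC (- INR m)) alpha
                    (RtoC (- INR m - INR k)) (1 + alpha + beta + RtoC (INR k))
                    (mu * RtoC t) m)%C)
    (at_right 0) (Rbar_locally p_infty)
    (CGamma beta / Cpowc mu beta
     * (poch (1 + alpha + RtoC (INR k)) m * poch (1 + beta + RtoC (INR k)) m
        / (poch (1 + RtoC (INR k)) m * poch (1 + alpha + beta + RtoC (INR k)) m)))%C.
Proof.
  intros _ Hk _ Hc Hb Hmu.
  pose proof (not_in_Z0minus_add_nat _ Hc) as Hc'.
  set (c := fun n => (poch (RtoC (- INR m)) n * poch alpha n
                      / (poch (RtoC (- INR m - INR k)) n * poch (1 + alpha + beta + RtoC (INR k)) n)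
                      / RtoC (INR (Factorial.fact n)))%C).
  replace (CGamma beta / Cpowc mu beta * _)%C
    with (gamma_int beta mu * sum_n (fun n => c n * poch beta n) m)%C.
  - apply is_RInt_0_infty_ext with
      (f := fun t => (gamma_kernel beta mu t * sum_n (fun n => c n * (mu * RtoC t) ^ n) m)%C);
      [|apply is_RInt_0_infty_gamma_kernel_poly; auto].
    intros t _. unfold gamma_kernel, F22_trunc. f_equal. apply sum_n_ext. intros n.
    unfold c. C_eq. unfold Cdiv. ring.
  - rewrite (sum_n_ext _ (saal_term alpha beta k m)).
    + rewrite pfaff_saalschutz, gamma_int_scale, <- CGamma_gamma_int by auto. reflexivity.
    + intros n. unfold c, saal_term. C_eq. unfold Cdiv. ring.
Qed.
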